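(* Let $R=\epsilon^2R_\epsilon$. At the point $\mathbf{x}(v)\in\mathcal{E}_e$ let $\hat{\mathbf{n}}(v)=(\sqrt{1-e^2}\cos v,\ \sin v,\ 0)/\sqrt{1-e^2\cos^2 v}$ be the unit normal to $\mathcal{E}_e$ in the plane $z=0$ and $\hat{\mathbf{k}}=(0,0,1)$. Then the second directional derivatives of $R$ at $\mathbf{x}(v)$ are $$\partial^2_{\hat{\mathbf n}}R=-\frac{\mu^2}{\lambda^3}\,\frac{1+e\cos v}{(1-e\cos v)(1+e^2+2e\cos v)},\qquad \partial^2_{\hat{\mathbf k}}R=-\frac{\mu^2}{\lambda^3}\,\frac{1}{1+e^2-2e\cos v},$$ so that the effective standard deviations $\epsilon\,|\partial^2_{\hat{\mathbf h}}R|^{-1/2}$ of the measure with density proportional to $\exp(2R/\epsilon^2)$, normal to the Kepler ellipse in the plane $z=0$ and in the $z$ direction, are respectively $$\frac{\epsilon\lambda^{3/2}}{\mu}\sqrt{\frac{(1-e\cos v)(1+e^2+2e\cos v)}{1+e\cos v}}\qquad\text{and}\qquad \frac{\epsilon\lambda^{3/2}}{\mu}\sqrt{1+e^2-2e\cos v}.$$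
   Context: Fix $\mu>0$, $\lambda>0$, $e\in(0,1)$ and set $a=\lambda^2/\mu$. For $\mathbf{x}=(x,y,z)\in\mathbb{R}^3$ let $\nu(\mathbf{x})=\frac{\mu}{\lambda^2}\big(|\mathbf{x}|-\frac{x}{e}-\frac{\mathrm{i}y\sqrt{1-e^2}}{e}\big)$, with $\sqrt{\cdot}$ the principal branch of the complex square root. Let $N=\{0\}\cup\{\mathbf{x}: y=0,\ \nu(\mathbf{x})\in[0,4]\}$. For $\epsilon>0$ define on $\mathbb{R}^3\setminus N$ $$R_\epsilon(\mathbf{x})=\frac{\lambda}{\epsilon^2}\Big[\ln|\nu|+2\ln\big|1+\sqrt{1-4/\nu}\big|-\frac{\mu|\mathbf{x}|}{\lambda^2}+\tfrac12\operatorname{Re}\big(\nu(1-\sqrt{1-4/\nu})\big)\Big],$$ so $R=\epsilon^2R_\epsilon$ is independent of $\epsilon$. The Kepler ellipse is $\mathcal{E}_e=\{\mathbf{x}(v):=(a\cos v-ae,\ a\sqrt{1-e^2}\sin v,\ 0):v\in[0,2\pi)\}$. *)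

From Stdlib Require Import Reals Lra.
Open Scope R_scope.

Definition Cx : Type := (R * R)%type.
Definition Cre (z : Cx) : R := fst z.
Definition Cim (z : Cx) : R := snd z.
Definition Cadd (z w : Cx) : Cx := (fst z + fst w, snd z + snd w).
Definition Csub (z w : Cx) : Cx := (fst z - fst w, snd z - snd w).
Definition Cmul (z w : Cx) : Cx :=
  (fst z * fst w - snd z * snd w, fst z * snd w + snd z * fst w).
Definition Cinv (z : Cx) : Cx :=
  let n := fst z ^ 2 + snd z ^ 2 in (fst z / n, - snd z / n).
Definition Cmod (z : Cx) : R := sqrt (fst z ^ 2 + snd z ^ 2).
Definition Cofr (r : R) : Cx := (r, 0).

(* Principal branch of the complex square root (Re >= 0; Im >= 0 on the
   negative real axis). *)
Definition Csqrt (z : Cx) : Cx :=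
  let r := Cmod z in
  (sqrt ((r + fst z) / 2),
   (if Rlt_dec (snd z) 0 then -1 else 1) * sqrt ((r - fst z) / 2)).

Definition R3 : Type := (R * R * R)%type.
Definition px (p : R3) : R := fst (fst p).
Definition py (p : R3) : R := snd (fst p).
Definition pz (p : R3) : R := snd p.
Definition norm3 (p : R3) : R := sqrt (px p ^ 2 + py p ^ 2 + pz p ^ 2).
Definition add3 (p q : R3) : R3 := (px p + px q, py p + py q, pz p + pz q).
Definition scal3 (t : R) (p : R3) : R3 := (t * px p, t * py p, t * pz p).

Definition nu (mu lam e : R) (p : R3) : Cx :=
  (mu / lam ^ 2 * (norm3 p - px p / e),
   mu / lam ^ 2 * (- (py p * sqrt (1 - e ^ 2) / e))).

(* R_eps(x) = lam/eps^2 [ ln|nu| + 2 ln|1+sqrt(1-4/nu)| - mu|x|/lam^2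
                          + 1/2 Re(nu (1 - sqrt(1-4/nu))) ]
   (total function; only meaningful off N) *)
Definition Reps (mu lam e eps : R) (p : R3) : R :=
  let n := nu mu lam e p in
  let s := Csqrt (Csub (Cofr 1) (Cmul (Cofr 4) (Cinv n))) in
  lam / eps ^ 2 *
  ( ln (Cmod n) + 2 * ln (Cmod (Cadd (Cofr 1) s))
    - mu * norm3 p / lam ^ 2
    + / 2 * Cre (Cmul n (Csub (Cofr 1) s)) ).

Definition xell (mu lam e v : R) : R3 :=
  let a := lam ^ 2 / mu in
  (a * cos v - a * e, a * sqrt (1 - e ^ 2) * sin v, 0).

Definition nhat (e v : R) : R3 :=
  let d := sqrt (1 - e ^ 2 * (cos v) ^ 2) in
  (sqrt (1 - e ^ 2) * cos v / d, sin v / d, 0).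

Definition khat : R3 := (0, 0, 1).

Definition second_dir_deriv (f : R3 -> R) (p h : R3) (val : R) : Prop :=
  exists g' : R -> R,
    (exists d, 0 < d /\ forall t, Rabs t < d ->
        derivable_pt_lim (fun s => f (add3 p (scal3 s h))) t (g' t)) /\
    derivable_pt_lim g' 0 val.

(* Write nu = X + i Y and s = sqrt (1 - 4/nu) (principal branch).  Then
   R = lam (F(nu) - c |x|) with c = mu/lam^2 and
   F(nu) = ln|nu| + 2 ln|1 + s| + Re (nu (1 - s))/2, a holomorphic function
   with F'(nu) = (1 - s)/2 and s' = nu' (1 - s^2)^2 / (8 s). *)

From Stdlib Require Import Reals Lra Nsatz.
Open Scope R_scope.

(* Derivative rules in the shape produced by the tactic [dsolve] below. *)
Lemma D_eq f x l l' : derivable_pt_lim f x l -> l = l' -> derivable_pt_lim f x l'.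
Proof. intros H <-; exact H. Qed.

Lemma D_plus (f g : R -> R) x l1 l2 : derivable_pt_lim f x l1 -> derivable_pt_lim g x l2 ->
  derivable_pt_lim (fun u => f u + g u) x (l1 + l2).
Proof. intros; apply (derivable_pt_lim_plus f g); auto. Qed.

Lemma D_minus (f g : R -> R) x l1 l2 : derivable_pt_lim f x l1 -> derivable_pt_lim g x l2 ->
  derivable_pt_lim (fun u => f u - g u) x (l1 - l2).
Proof. intros; apply (derivable_pt_lim_minus f g); auto. Qed.

Lemma D_mult (f g : R -> R) x l1 l2 : derivable_pt_lim f x l1 -> derivable_pt_lim g x l2 ->
  derivable_pt_lim (fun u => f u * g u) x (l1 * g x + f x * l2).
Proof. intros; apply (derivable_pt_lim_mult f g); auto. Qed.

Lemma D_div (f g : R -> R) x l1 l2 : derivable_pt_lim f x l1 -> derivable_pt_lim g x l2 ->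
  g x <> 0 -> derivable_pt_lim (fun u => f u / g u) x ((l1 * g x - l2 * f x) / g x ^ 2).
Proof.
  intros. eapply D_eq; [apply (derivable_pt_lim_div f g x l1 l2); auto|].
  unfold Rsqr; field; auto.
Qed.

Lemma D_opp (f : R -> R) x l : derivable_pt_lim f x l ->
  derivable_pt_lim (fun u => - f u) x (- l).
Proof. intros; apply (derivable_pt_lim_opp f); auto. Qed.

Lemma D_sq (f : R -> R) x l : derivable_pt_lim f x l ->
  derivable_pt_lim (fun u => f u ^ 2) x (2 * f x * l).
Proof.
  intros. eapply D_eq; [apply (derivable_pt_lim_comp f (fun y => y ^ 2) x l); auto|].
  - apply derivable_pt_lim_pow.
  - simpl; ring.
Qed.

Lemma D_sqrt (f : R -> R) x l : derivable_pt_lim f x l -> 0 < f x ->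
  derivable_pt_lim (fun u => sqrt (f u)) x (l / (2 * sqrt (f x))).
Proof.
  intros. eapply D_eq; [apply (derivable_pt_lim_comp f sqrt x l); auto|].
  - apply derivable_pt_lim_sqrt; auto.
  - unfold Rdiv; ring.
Qed.

Lemma D_ln (f : R -> R) x l : derivable_pt_lim f x l -> 0 < f x ->
  derivable_pt_lim (fun u => ln (f u)) x (l / f x).
Proof.
  intros. eapply D_eq; [apply (derivable_pt_lim_comp f ln x l); auto|].
  - apply derivable_pt_lim_ln; auto.
  - unfold Rdiv; ring.
Qed.

Lemma D_lnsqrt (f : R -> R) x l : derivable_pt_lim f x l -> 0 < f x ->
  derivable_pt_lim (fun u => ln (sqrt (f u))) x (l / (2 * f x)).
Proof.
  intros Hf Hpos. assert (Hs := sqrt_lt_R0 _ Hpos).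
  assert (Hss := sqrt_sqrt (f x) (Rlt_le _ _ Hpos)).
  eapply D_eq; [apply (D_ln (fun u => sqrt (f u))); [apply (D_sqrt f x l)|]; auto|].
  field_simplify_eq; [rewrite <- Hss at 1; ring | lra].
Qed.

Ltac dstep :=
  match goal with
  | |- derivable_pt_lim (fun _ => ?c) _ _ => apply (derivable_pt_lim_const c)
  | |- derivable_pt_lim (fun u => u) _ _ => apply derivable_pt_lim_id
  | |- derivable_pt_lim (fun u => @?f u + @?g u) _ _ => apply (D_plus f g)
  | |- derivable_pt_lim (fun u => @?f u - @?g u) _ _ => apply (D_minus f g)
  | |- derivable_pt_lim (fun u => @?f u * @?g u) _ _ => apply (D_mult f g)
  | |- derivable_pt_lim (fun u => @?f u / @?g u) _ _ => apply (D_div f g)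
  | |- derivable_pt_lim (fun u => - @?f u) _ _ => apply (D_opp f)
  | |- derivable_pt_lim (fun u => ln (sqrt (@?f u))) _ _ => apply (D_lnsqrt f)
  | |- derivable_pt_lim (fun u => sqrt (@?f u)) _ _ => apply (D_sqrt f)
  | |- derivable_pt_lim (fun u => ln (@?f u)) _ _ => apply (D_ln f)
  | |- derivable_pt_lim (fun u => (@?f u) ^ 2) _ _ => apply (D_sq f)
  | |- derivable_pt_lim _ _ _ => eassumption
  end.
Ltac dsolve := repeat dstep.

Ltac dside := cbv beta; try lra; try (apply pow_nonzero; lra);
  try (apply Rgt_not_eq; lra); try (apply Rlt_not_eq; lra).

Definition near (x : R) (P : R -> Prop) : Prop :=
  exists d, 0 < d /\ forall u, Rabs (u - x) < d -> P u.

Lemma near_and x (P Q : R -> Prop) : near x P -> near x Q -> near x (fun u => P u /\ Q u).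
Proof.
  intros [d1 [Hd1 H1]] [d2 [Hd2 H2]]. exists (Rmin d1 d2). split; [apply Rmin_pos; auto|].
  intros u Hu. split; [apply H1 | apply H2];
    eapply Rlt_le_trans; eauto; [apply Rmin_l | apply Rmin_r].
Qed.

Lemma near_pos (f : R -> R) x l : derivable_pt_lim f x l -> 0 < f x ->
  near x (fun u => 0 < f u).
Proof.
  intros Hf Hpos.
  assert (Hc : continuity_pt f x) by (apply derivable_continuous_pt; exists l; exact Hf).
  destruct (Hc (f x) Hpos) as [d [Hd H]]. exists d; split; auto. intros u Hu.
  destruct (Req_dec u x) as [->|Hne]; auto.
  specialize (H u (conj (conj I (not_eq_sym Hne)) Hu)). simpl in H. unfold R_dist in H.
  apply Rabs_def2 in H. lra.
Qed.

Lemma near_ext (f g : R -> R) x l : near x (fun u => f u = g u) ->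
  derivable_pt_lim f x l -> derivable_pt_lim g x l.
Proof.
  intros [d [Hd H]] Hf. apply (derivable_pt_lim_locally_ext f g x (x - d) (x + d)); auto.
  - lra.
  - intros z Hz. apply H. apply Rabs_def1; lra.
Qed.

Lemma sqrt_sq_abs x : sqrt (x ^ 2) = Rabs x.
Proof. rewrite <- sqrt_Rsqr_abs. unfold Rsqr; f_equal; ring. Qed.

Lemma Csqrt_parts zr zi :
  let a := fst (Csqrt (zr, zi)) in let b := snd (Csqrt (zr, zi)) in
  0 <= a /\ sqrt (zr ^ 2 + zi ^ 2) = a ^ 2 + b ^ 2 /\ zr = a ^ 2 - b ^ 2 /\ zi = 2 * a * b.
Proof.
  unfold Csqrt, Cmod; cbn [fst snd]. set (m := sqrt (zr ^ 2 + zi ^ 2)).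
  assert (Hm2 : m * m = zr ^ 2 + zi ^ 2) by (apply sqrt_sqrt; nra).
  assert (Hm0 : 0 <= m) by apply sqrt_pos.
  assert (Hmz : Rabs zr <= m) by (rewrite <- sqrt_sq_abs; apply sqrt_le_1_alt; nra).
  assert (Hzr := Rle_abs zr). assert (Hzr' := Rle_abs (- zr)). rewrite Rabs_Ropp in Hzr'.
  assert (Ha2 : sqrt ((m + zr) / 2) ^ 2 = (m + zr) / 2)
    by (rewrite <- Rsqr_pow2; apply Rsqr_sqrt; lra).
  assert (Hb2 : sqrt ((m - zr) / 2) ^ 2 = (m - zr) / 2)
    by (rewrite <- Rsqr_pow2; apply Rsqr_sqrt; lra).
  assert (Hsg : (if Rlt_dec zi 0 then -1 else 1) ^ 2 = 1)
    by (destruct (Rlt_dec zi 0); simpl; ring).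
  assert (Hab : sqrt ((m + zr) / 2) * sqrt ((m - zr) / 2) = Rabs zi / 2).
  { rewrite <- sqrt_mult by lra.
    replace ((m + zr) / 2 * ((m - zr) / 2)) with ((zi / 2) ^ 2) by nra.
    rewrite sqrt_sq_abs. unfold Rdiv. rewrite Rabs_mult, (Rabs_pos_eq (/ 2)); lra. }
  split; [apply sqrt_pos|].
  rewrite !Rpow_mult_distr, Hsg, Ha2, Hb2.
  split; [field|]. split; [field|].
  transitivity ((if Rlt_dec zi 0 then -1 else 1) *
                (2 * (sqrt ((m + zr) / 2) * sqrt ((m - zr) / 2)))); [|ring].
  rewrite Hab. destruct (Rlt_dec zi 0); [rewrite Rabs_left | rewrite Rabs_right]; lra.
Qed.

Lemma Csqrt_char zr zi a b : 0 < a -> zr = a ^ 2 - b ^ 2 -> zi = 2 * a * b ->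
  Csqrt (zr, zi) = (a, b).
Proof.
  intros Ha Hr Hi. unfold Csqrt, Cmod; cbn [fst snd].
  replace (zr ^ 2 + zi ^ 2) with ((a ^ 2 + b ^ 2) ^ 2) by (rewrite Hr, Hi; ring).
  rewrite sqrt_sq_abs, Rabs_pos_eq by nra.
  replace ((a ^ 2 + b ^ 2 + zr) / 2) with (a ^ 2) by (rewrite Hr; field).
  replace ((a ^ 2 + b ^ 2 - zr) / 2) with (b ^ 2) by (rewrite Hr; field).
  rewrite !sqrt_sq_abs, (Rabs_pos_eq a) by lra. f_equal.
  destruct (Rlt_dec zi 0) as [Hn|Hn]; rewrite Hi in Hn.
  - rewrite Rabs_left by nra. ring.
  - rewrite Rabs_pos_eq by nra. ring.
Qed.

(* The
   imaginary part is handled through the identity Im z = 2 Re s Im s, which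
   avoids any case analysis on the sign of Im z. *)
Lemma Csqrt_path_deriv (zr zi : R -> R) t dzr dzi :
  derivable_pt_lim zr t dzr -> derivable_pt_lim zi t dzi ->
  0 < fst (Csqrt (zr t, zi t)) ->
  let a := fst (Csqrt (zr t, zi t)) in let b := snd (Csqrt (zr t, zi t)) in
  derivable_pt_lim (fun u => fst (Csqrt (zr u, zi u))) t
    ((a * dzr + b * dzi) / (2 * (a ^ 2 + b ^ 2))) /\
  derivable_pt_lim (fun u => snd (Csqrt (zr u, zi u))) t
    ((a * dzi - b * dzr) / (2 * (a ^ 2 + b ^ 2))).
Proof.
  intros Hzr Hzi Ha a b. fold a in Ha.
  destruct (Csqrt_parts (zr t) (zi t)) as [_ [Hm [Hr Hi]]]; fold a b in Hm, Hr, Hi.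
  assert (Hre : derivable_pt_lim (fun u => fst (Csqrt (zr u, zi u))) t
                  ((a * dzr + b * dzi) / (2 * (a ^ 2 + b ^ 2)))).
  { change (derivable_pt_lim (fun u => sqrt ((sqrt (zr u ^ 2 + zi u ^ 2) + zr u) / 2)) t
      ((a * dzr + b * dzi) / (2 * (a ^ 2 + b ^ 2)))).
    eapply D_eq; [dsolve|]; dside.
    - rewrite Hr, Hi. replace ((a ^ 2 - b ^ 2) ^ 2 + (2 * a * b) ^ 2) with ((a ^ 2 + b ^ 2) ^ 2)
        by ring. apply pow_lt. nra.
    - rewrite Hm, Hr. nra.
    - change (sqrt ((sqrt (zr t ^ 2 + zi t ^ 2) + zr t) / 2)) with a.
      rewrite Hm, Hr, Hi. field. nra. }
  split; [exact Hre|].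
  apply (near_ext (fun u => zi u / (2 * fst (Csqrt (zr u, zi u))))).
  - destruct (near_pos _ _ _ Hre Ha) as [d [Hd H]]. exists d; split; auto. intros u Hu.
    specialize (H u Hu). cbv beta in H |- *.
    destruct (Csqrt_parts (zr u) (zi u)) as [_ [_ [_ Hiu]]].
    set (s := Csqrt (zr u, zi u)) in *. rewrite Hiu. field. lra.
  - eapply D_eq; [dsolve|]; dside.
    + fold a. lra.
    + fold a. rewrite Hi. field. nra.
Qed.

(* Real and imaginary parts of w = 1 - 4/nu, for nu = X + i Y. *)
Definition wre (X Y : R) : R := 1 - 4 * X / (X ^ 2 + Y ^ 2).
Definition wim (X Y : R) : R := 4 * Y / (X ^ 2 + Y ^ 2).

Definition sroot (X Y : R) : Cx := Csqrt (wre X Y, wim X Y).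

Definition Fnu (X Y : R) : R :=
  ln (sqrt (X ^ 2 + Y ^ 2))
  + 2 * ln (sqrt ((1 + fst (sroot X Y)) ^ 2 + snd (sroot X Y) ^ 2))
  + / 2 * (X * (1 - fst (sroot X Y)) + Y * snd (sroot X Y)).

Lemma Reps_Fnu mu lam e eps p :
  Reps mu lam e eps p = lam / eps ^ 2 *
    (Fnu (fst (nu mu lam e p)) (snd (nu mu lam e p)) - mu * norm3 p / lam ^ 2).
Proof.
  unfold Reps, Fnu, sroot.
  destruct (nu mu lam e p) as [X Y]; cbn [fst snd].
  replace (Csub (Cofr 1) (Cmul (Cofr 4) (Cinv (X, Y)))) with (wre X Y, wim X Y)
    by (unfold Csub, Cofr, Cmul, Cinv, wre, wim; cbn [fst snd]; f_equal; unfold Rdiv; ring).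
  destruct (Csqrt (wre X Y, wim X Y)) as [a b].
  unfold Cmod, Cadd, Cofr, Cre, Cmul, Csub; cbn [fst snd]. rewrite Rplus_0_l. ring.
Qed.

(* nu is recovered from s as nu = 4 / (1 - s^2). *)
Lemma nu_of_sroot X Y a b : 0 < X ^ 2 + Y ^ 2 ->
  wre X Y = a ^ 2 - b ^ 2 -> wim X Y = 2 * a * b ->
  let D := (1 - a ^ 2 + b ^ 2) ^ 2 + (2 * a * b) ^ 2 in
  0 < D /\ X = 4 * (1 - a ^ 2 + b ^ 2) / D /\ Y = 8 * a * b / D.
Proof.
  intros HN Hr Hi D. unfold wre, wim in Hr, Hi. set (N := X ^ 2 + Y ^ 2) in *.
  assert (EX : X = (1 - a ^ 2 + b ^ 2) * N / 4).
  { replace X with ((4 * X / N) * N / 4) by (field; lra). f_equal. f_equal. lra. }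
  assert (EY : Y = 2 * a * b * N / 4).
  { replace Y with ((4 * Y / N) * N / 4) by (field; lra). rewrite Hi. reflexivity. }
  assert (HDN : D * N = 16).
  { apply Rmult_eq_reg_l with N; [|lra].
    transitivity (16 * (X ^ 2 + Y ^ 2)); [rewrite EX, EY; unfold D; field | fold N; ring]. }
  assert (HD : 0 < D) by nra.
  split; [exact HD|]. split.
  - rewrite EX. replace N with (16 / D) by (field_simplify_eq; lra). field. lra.
  - rewrite EY. replace N with (16 / D) by (field_simplify_eq; lra). field. lra.
Qed.

(* ds/dnu = 2 / (nu^2 s) = (1 - s^2)^2 / (8 s): the derivative of s along a
   path is [sroot_deriv s nu'] with s the current value of the root. *)
Definition sroot_deriv (s dnu : Cx) : Cx :=
  let q := Csub (Cofr 1) (Cmul s s) in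
  Cmul (Cmul dnu (Cmul q q)) (Cinv (Cmul (Cofr 8) s)).

Lemma sroot_path_deriv (X Y : R -> R) t dX dY :
  derivable_pt_lim X t dX -> derivable_pt_lim Y t dY ->
  0 < X t ^ 2 + Y t ^ 2 -> 0 < fst (sroot (X t) (Y t)) ->
  derivable_pt_lim (fun u => fst (sroot (X u) (Y u))) t
    (fst (sroot_deriv (sroot (X t) (Y t)) (dX, dY))) /\
  derivable_pt_lim (fun u => snd (sroot (X u) (Y u))) t
    (snd (sroot_deriv (sroot (X t) (Y t)) (dX, dY))).
Proof.
  intros HX HY HN Ha.
  pose (N := X t ^ 2 + Y t ^ 2).
  pose (dN := 2 * X t * dX + 2 * Y t * dY).
  assert (Hwr : derivable_pt_lim (fun u => wre (X u) (Y u)) t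
                  (- ((4 * dX * N - dN * (4 * X t)) / N ^ 2))).
  { unfold wre. eapply D_eq; [dsolve|]; dside. unfold dN, N. field. lra. }
  assert (Hwi : derivable_pt_lim (fun u => wim (X u) (Y u)) t
                  ((4 * dY * N - dN * (4 * Y t)) / N ^ 2)).
  { unfold wim. eapply D_eq; [dsolve|]; dside. unfold dN, N. field. lra. }
  destruct (Csqrt_path_deriv _ _ t _ _ Hwr Hwi Ha) as [Hre Him].
  assert (Hp := Csqrt_parts (wre (X t) (Y t)) (wim (X t) (Y t))).
  change (Csqrt (wre (X t) (Y t), wim (X t) (Y t))) with (sroot (X t) (Y t)) in *.
  destruct (sroot (X t) (Y t)) as [a b]; cbn [fst snd] in *.
  destruct Hp as [_ [_ [Hr Hi]]].
  destruct (nu_of_sroot _ _ _ _ HN Hr Hi) as [HD [EX EY]].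
  assert (Hab : 0 < a ^ 2 + b ^ 2) by nra.
  unfold sroot_deriv, Csub, Cmul, Cinv, Cofr; cbn [fst snd].
  split; (eapply D_eq; [eassumption|]); unfold dN, N; rewrite EX, EY; field; nra.
Qed.

(* dF/dnu = (1 - s)/2: the gradient of F in real coordinates is
   ((1 - Re s)/2, Im s / 2). *)
Lemma Fnu_path_deriv (X Y : R -> R) t dX dY :
  derivable_pt_lim X t dX -> derivable_pt_lim Y t dY ->
  0 < X t ^ 2 + Y t ^ 2 -> 0 < fst (sroot (X t) (Y t)) ->
  derivable_pt_lim (fun u => Fnu (X u) (Y u)) t
    (/ 2 * ((1 - fst (sroot (X t) (Y t))) * dX + snd (sroot (X t) (Y t)) * dY)).
Proof.
  intros HX HY HN Ha.
  destruct (sroot_path_deriv X Y t dX dY HX HY HN Ha) as [Hre Him].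
  assert (Hp := Csqrt_parts (wre (X t) (Y t)) (wim (X t) (Y t))).
  change (Csqrt (wre (X t) (Y t), wim (X t) (Y t))) with (sroot (X t) (Y t)) in Hp.
  unfold Fnu. eapply D_eq; [dsolve|]; dside.
  all: destruct (sroot (X t) (Y t)) as [a b]; cbn [fst snd] in *.
  - nra.
  - destruct Hp as [_ [_ [Hr Hi]]].
    destruct (nu_of_sroot _ _ _ _ HN Hr Hi) as [HD [EX EY]].
    unfold sroot_deriv, Csub, Cmul, Cinv, Cofr; cbn [fst snd].
    rewrite EX, EY. field. nra.
Qed.

Section Line.
Variables p h : R3.

Definition lpt (t : R) : R3 := add3 p (scal3 t h).

Lemma lpt_0 : lpt 0 = p.
Proof.
  unfold lpt. destruct p as [[x y] z]. unfold add3, scal3, px, py, pz; simpl.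
  f_equal; [f_equal|]; ring.
Qed.

Definition pdoth : R := px p * px h + py p * py h + pz p * pz h.
Definition hsq : R := px h ^ 2 + py h ^ 2 + pz h ^ 2.

Lemma norm3_line_deriv t : 0 < norm3 (lpt t) ->
  derivable_pt_lim (fun u => norm3 (lpt u)) t ((pdoth + t * hsq) / norm3 (lpt t)).
Proof.
  intro Hr.
  change (0 < sqrt ((px p + t * px h) ^ 2 + (py p + t * py h) ^ 2 + (pz p + t * pz h) ^ 2)) in Hr.
  change (derivable_pt_lim
            (fun u => sqrt ((px p + u * px h) ^ 2 + (py p + u * py h) ^ 2 + (pz p + u * pz h) ^ 2))
            t ((pdoth + t * hsq) /
               sqrt ((px p + t * px h) ^ 2 + (py p + t * py h) ^ 2 + (pz p + t * pz h) ^ 2))).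
  eapply D_eq; [dsolve|].
  - apply (sqrt_lt_0_alt 0). rewrite sqrt_0. exact Hr.
  - unfold pdoth, hsq. field. lra.
Qed.

Lemma nu_line_deriv mu lam e t : e <> 0 -> 0 < norm3 (lpt t) ->
  derivable_pt_lim (fun u => fst (nu mu lam e (lpt u))) t
    (mu / lam ^ 2 * ((pdoth + t * hsq) / norm3 (lpt t) - px h / e)) /\
  derivable_pt_lim (fun u => snd (nu mu lam e (lpt u))) t
    (mu / lam ^ 2 * - (py h * sqrt (1 - e ^ 2) / e)).
Proof.
  intros He Hr. assert (Hn := norm3_line_deriv t Hr). split.
  - change (derivable_pt_lim (fun u => mu / lam ^ 2 * (norm3 (lpt u) - (px p + u * px h) / e))
              t (mu / lam ^ 2 * ((pdoth + t * hsq) / norm3 (lpt t) - px h / e))).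
    eapply D_eq; [dsolve|]; dside.
    rewrite Rmult_0_l, Rplus_0_l. do 2 f_equal. field. exact He.
  - change (derivable_pt_lim
              (fun u => mu / lam ^ 2 * - ((py p + u * py h) * sqrt (1 - e ^ 2) / e))
              t (mu / lam ^ 2 * - (py h * sqrt (1 - e ^ 2) / e))).
    eapply D_eq; [dsolve|]; dside.
    rewrite Rmult_0_l, Rplus_0_l. do 2 f_equal. field. exact He.
Qed.

End Line.

(* Writing R = lam (F(nu) - c |x|) with c = mu/lam^2, and noting
   that nu is affine in (|x|, x, y) so that nu'' = c |x|'' along the line,
     R'' = lam (Re (F''(nu) nu'^2 + F'(nu) nu'') - c |x|''),
   with F'(nu) = (1 - s)/2 and F''(nu) nu' = - s'/2. *)
Lemma Reps_second_dir_deriv mu lam e eps p h val :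
  0 < lam -> eps <> 0 -> e <> 0 -> 0 < norm3 p ->
  let X0 := fst (nu mu lam e p) in let Y0 := snd (nu mu lam e p) in
  0 < X0 ^ 2 + Y0 ^ 2 -> 0 < fst (sroot X0 Y0) ->
  let c := mu / lam ^ 2 in
  let r0 := norm3 p in
  let dr := pdoth p h / r0 in
  let ddr := (hsq h - dr ^ 2) / r0 in
  let dnu := (c * (dr - px h / e), c * - (py h * sqrt (1 - e ^ 2) / e)) in
  let s := sroot X0 Y0 in
  let ds := sroot_deriv s dnu in
  val = lam * (/ 2 * (- Cre (Cmul ds dnu) + (1 - fst s) * (c * ddr)) - c * ddr) ->
  second_dir_deriv (fun q => eps ^ 2 * Reps mu lam e eps q) p h val.
Proof.
  intros Hlam Heps He Hp X0 Y0 HN0 Ha0 c r0 dr0 ddr0 dnu s ds Hval.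
  pose (r := fun u => norm3 (lpt p h u)).
  pose (X := fun u => fst (nu mu lam e (lpt p h u))).
  pose (Y := fun u => snd (nu mu lam e (lpt p h u))).
  pose (dr := fun u => (pdoth p h + u * hsq h) / r u).
  pose (dX := fun u => c * (dr u - px h / e)).
  pose (dY := snd dnu).
  assert (Hr0 : r 0 = r0) by (unfold r; rewrite lpt_0; reflexivity).
  assert (HX0 : X 0 = X0) by (unfold X; rewrite lpt_0; reflexivity).
  assert (HY0 : Y 0 = Y0) by (unfold Y; rewrite lpt_0; reflexivity).
  assert (Hdnu : (dX 0, dY) = dnu).
  { unfold dX, dY, dr, dnu, dr0. rewrite Hr0, Rmult_0_l, Rplus_0_r. reflexivity. }
  rewrite <- HX0, <- HY0 in HN0, Ha0.
  assert (Hp0 : 0 < r 0) by (rewrite Hr0; exact Hp).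
  (* The hypotheses made at p persist near t = 0. *)
  assert (Hderiv : forall u, 0 < r u ->
            derivable_pt_lim r u (dr u) /\ derivable_pt_lim X u (dX u) /\
            derivable_pt_lim Y u dY)
    by (intros u Hu; split; [apply norm3_line_deriv | apply nu_line_deriv]; auto).
  destruct (Hderiv 0 Hp0) as [Hr' [HX' HY']].
  destruct (sroot_path_deriv X Y 0 _ _ HX' HY' HN0 Ha0) as [Hs1 Hs2].
  assert (HN' : derivable_pt_lim (fun u => X u ^ 2 + Y u ^ 2) 0
                  (2 * X 0 * dX 0 + 2 * Y 0 * dY)) by (eapply D_eq; [dsolve|]; ring).
  assert (Hnear : near 0 (fun u => 0 < r u /\ (0 < X u ^ 2 + Y u ^ 2
                                                /\ 0 < fst (sroot (X u) (Y u)))))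
    by repeat (apply near_and || eapply near_pos; eauto).
  destruct Hnear as [d [Hd Hnear]].
  (* First derivative: R' = lam (Re (F'(nu) nu') - c |x|'). *)
  exists (fun u => lam * (/ 2 * ((1 - fst (sroot (X u) (Y u))) * dX u
                                 + snd (sroot (X u) (Y u)) * dY) - c * dr u)).
  split.
  - exists d. split; [exact Hd|]. intros u Hu.
    rewrite <- (Rminus_0_r u) in Hu. destruct (Hnear u Hu) as [Hru [HNu Hau]].
    destruct (Hderiv u Hru) as [Hr'u [HX'u HY'u]].
    apply (derivable_pt_lim_ext (fun u => lam * (Fnu (X u) (Y u) - c * r u))).
    { intro z. rewrite Reps_Fnu. unfold c, X, Y, r, lpt. field. split; lra. }
    eapply D_eq; [dsolve; apply (Fnu_path_deriv X Y u (dX u) dY); auto|]. ring.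
  - assert (Hdr : derivable_pt_lim dr 0 ddr0).
    { unfold dr. eapply D_eq; [dsolve|]; [lra|].
      change (dr 0) with ((pdoth p h + 0 * hsq h) / r 0).
      unfold ddr0, dr0. rewrite Hr0. field. rewrite <- Hr0. lra. }
    eapply D_eq; [unfold dX; dsolve|].
    rewrite Hval. unfold ds, s, Cre, Cmul. rewrite <- Hdnu, <- HX0, <- HY0. cbn [fst snd].
    unfold dX. ring.
Qed.

Lemma sqrt_sq_pos x : 0 <= x -> sqrt x ^ 2 = x.
Proof. intro Hx. rewrite <- Rsqr_pow2. apply Rsqr_sqrt. exact Hx. Qed.

Lemma cos_sin_sq v : sin v ^ 2 = 1 - cos v ^ 2.
Proof. rewrite <- (sin2_cos2 v). unfold Rsqr. ring. Qed.

Lemma ecos_bound e v : 0 < e < 1 -> - e <= e * cos v <= e.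
Proof. intros He. destruct (COS_bound v). split; nra. Qed.

Lemma xell_norm mu lam e v : 0 < mu -> 0 < lam -> 0 < e < 1 ->
  norm3 (xell mu lam e v) = lam ^ 2 / mu * (1 - e * cos v).
Proof.
  intros Hmu Hlam He. assert (HC := ecos_bound e v He).
  assert (Hk := sqrt_sq_pos (1 - e ^ 2) ltac:(nra)). assert (HS := cos_sin_sq v).
  unfold norm3, xell, px, py, pz; cbn [fst snd].
  replace ((lam ^ 2 / mu * cos v - lam ^ 2 / mu * e) ^ 2
           + (lam ^ 2 / mu * sqrt (1 - e ^ 2) * sin v) ^ 2 + 0 ^ 2)
    with ((lam ^ 2 / mu * (1 - e * cos v)) ^ 2).
  - rewrite sqrt_sq_abs. apply Rabs_pos_eq.
    apply Rmult_le_pos; [apply Rlt_le, Rdiv_lt_0_compat; [apply pow_lt | ] | ]; lra.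
  - rewrite !Rpow_mult_distr, Hk, HS. field. lra.
Qed.

Lemma xell_nu mu lam e v : 0 < mu -> 0 < lam -> 0 < e < 1 ->
  nu mu lam e (xell mu lam e v) =
    ((2 * e - (1 + e ^ 2) * cos v) / e, - (1 - e ^ 2) * sin v / e).
Proof.
  intros Hmu Hlam He. unfold nu. rewrite xell_norm by auto.
  assert (Hk := sqrt_sq_pos (1 - e ^ 2) ltac:(nra)).
  unfold xell, px, py; cbn [fst snd]. f_equal.
  - field. lra.
  - set (k := sqrt (1 - e ^ 2)) in *. rewrite <- Hk. field. lra.
Qed.

Lemma xell_nu_abs e v : 0 < e ->
  ((2 * e - (1 + e ^ 2) * cos v) / e) ^ 2 + (- (1 - e ^ 2) * sin v / e) ^ 2
  = ((1 - 2 * e * cos v + e ^ 2) / e) ^ 2.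
Proof. intro He. field_simplify_eq; [rewrite cos_sin_sq; ring | lra]. Qed.

Definition kepler_s (e C S : R) : Cx :=
  ((1 - e ^ 2) / (1 - 2 * e * C + e ^ 2), -2 * e * S / (1 - 2 * e * C + e ^ 2)).

Lemma xell_sroot e v : 0 < e < 1 ->
  sroot ((2 * e - (1 + e ^ 2) * cos v) / e) (- (1 - e ^ 2) * sin v / e) =
    kepler_s e (cos v) (sin v).
Proof.
  intros He. assert (HC := ecos_bound e v He). assert (HS := cos_sin_sq v).
  unfold sroot, wre, wim, kepler_s. rewrite xell_nu_abs by lra.
  set (D0 := 1 - 2 * e * cos v + e ^ 2).
  assert (HD0 : 0 < D0) by (unfold D0; nra).
  apply Csqrt_char.
  - apply Rdiv_lt_0_compat; nra.
  - field_simplify_eq; [|split; lra]. unfold D0. rewrite HS. ring.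
  - field. split; lra.
Qed.

Lemma Reps_second_dir_deriv_xell mu lam e eps v h val :
  0 < mu -> 0 < lam -> 0 < e < 1 -> eps <> 0 ->
  let A := lam ^ 2 / mu in let k := sqrt (1 - e ^ 2) in
  let s := kepler_s e (cos v) (sin v) in
  let r0 := A * (1 - e * cos v) in
  let dr := ((A * cos v - A * e) * px h + A * k * sin v * py h) / r0 in
  let ddr := (hsq h - dr ^ 2) / r0 in
  let c := mu / lam ^ 2 in
  let dnu := (c * (dr - px h / e), c * - (py h * k / e)) in
  let ds := sroot_deriv s dnu in
  val = lam * (/ 2 * (- Cre (Cmul ds dnu) + (1 - fst s) * (c * ddr)) - c * ddr) ->
  second_dir_deriv (fun q => eps ^ 2 * Reps mu lam e eps q) (xell mu lam e v) h val.
Proof.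
  intros Hmu Hlam He Heps A k s r0 dr ddr c dnu ds Hval.
  assert (HC := ecos_bound e v He).
  apply Reps_second_dir_deriv; try lra; cbv zeta;
    rewrite ?xell_nu, ?xell_norm by auto; cbn [fst snd]; try rewrite (xell_sroot e v He).
  - apply Rmult_lt_0_compat; [apply Rdiv_lt_0_compat; [apply pow_lt|]|]; lra.
  - rewrite xell_nu_abs by lra. apply pow_lt, Rdiv_lt_0_compat; nra.
  - unfold kepler_s; cbn [fst]. apply Rdiv_lt_0_compat; nra.
  - rewrite Hval. unfold ds, dnu, c, ddr, dr, r0, s, k, A, pdoth, xell, px, py, pz.
    cbn [fst snd].
    rewrite Rmult_0_l, Rplus_0_r. reflexivity.
Qed.

Ltac nsatz_eqs :=
  repeat match goal with x := _ |- _ => clearbody x end;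
  repeat match goal with H : ?P |- _ =>
    lazymatch P with @eq R _ _ => fail | R => fail | _ => clear H end end;
  simpl in *; nsatz.

(* Vertical direction: nu' = 0 and |x|'' = 1/|x|, so
   R'' = - lam c (1 + Re s) / (2 |x|). *)
Lemma khat_second_deriv mu lam e eps v : 0 < mu -> 0 < lam -> 0 < e < 1 -> 0 < eps ->
  second_dir_deriv (fun q => eps ^ 2 * Reps mu lam e eps q) (xell mu lam e v) khat
    (- (mu ^ 2 / lam ^ 3) * (1 / (1 + e ^ 2 - 2 * e * cos v))).
Proof.
  intros Hmu Hlam He Heps.
  assert (HC := ecos_bound e v He).
  apply Reps_second_dir_deriv_xell; try lra.
  unfold khat, hsq, px, py, pz, kepler_s, sroot_deriv, Cre, Csub, Cmul, Cinv, Cofr; cbn [fst snd].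
  assert (HS := cos_sin_sq v).
  set (C := cos v) in *; set (S := sin v) in *.
  field_simplify_eq; [nsatz_eqs|].
  assert (He2 : 0 < 1 - e ^ 2) by nra.
  repeat split; try nra; apply Rgt_not_eq; nra.
Qed.

(* For nu' = c q (e - e^{iv}) / e (the normal direction), using
   s = (1 + e e^{-iv}) / (1 - e e^{-iv}) one finds
   Re (s' nu') = 2 c^2 q^2 Re (1 / (1 - e^2 e^{-2iv})). *)
Lemma kepler_sroot_deriv_normal e C S c q : 0 < e < 1 -> - e <= e * C <= e ->
  S ^ 2 = 1 - C ^ 2 ->
  Cre (Cmul (sroot_deriv (kepler_s e C S) (c * (q * (e - C) / e), c * - (q * S / e)))
            (c * (q * (e - C) / e), c * - (q * S / e)))
  = 2 * c ^ 2 * q ^ 2 * (1 + e ^ 2 - 2 * e ^ 2 * C ^ 2)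
    / ((1 - 2 * e * C + e ^ 2) * (1 + e ^ 2 + 2 * e * C)).
Proof.
  intros He HC HS.
  assert (HD0 : 0 < 1 - 2 * e * C + e ^ 2) by nra.
  assert (HD1 : 0 < 1 + e ^ 2 + 2 * e * C) by nra.
  unfold kepler_s, sroot_deriv, Cre, Csub, Cmul, Cinv, Cofr; cbn [fst snd].
  field_simplify_eq; [nsatz_eqs | repeat split; nra].
Qed.

(* Normal direction in the plane: with q = sqrt (1 - e^2) / sqrt (1 - e^2 cos^2 v),
   |x|' = q, |x|'' = e^2 sin^2 v / ((1 - e^2 cos^2 v) |x|), and nu' is as in
   [kepler_sroot_deriv_normal]. *)
Lemma nhat_second_deriv mu lam e eps v : 0 < mu -> 0 < lam -> 0 < e < 1 -> 0 < eps ->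
  second_dir_deriv (fun q => eps ^ 2 * Reps mu lam e eps q) (xell mu lam e v) (nhat e v)
    (- (mu ^ 2 / lam ^ 3) *
     ((1 + e * cos v) / ((1 - e * cos v) * (1 + e ^ 2 + 2 * e * cos v)))).
Proof.
  intros Hmu Hlam He Heps.
  assert (HC := ecos_bound e v He).
  apply Reps_second_dir_deriv_xell; try lra. cbv zeta.
  unfold nhat, hsq, px, py, pz; cbn [fst snd].
  assert (HS := cos_sin_sq v).
  assert (Hk := sqrt_sq_pos (1 - e ^ 2) ltac:(nra)).
  assert (Hk0 : 0 < sqrt (1 - e ^ 2)) by (apply sqrt_lt_R0; nra).
  assert (Hd := sqrt_sq_pos (1 - e ^ 2 * cos v ^ 2) ltac:(nra)).
  assert (Hd0 : 0 < sqrt (1 - e ^ 2 * cos v ^ 2)) by (apply sqrt_lt_R0; nra).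
  assert (HA : 0 < lam ^ 2 / mu) by (apply Rdiv_lt_0_compat; [apply pow_lt|]; lra).
  set (C := cos v) in *; set (S := sin v) in *; set (A := lam ^ 2 / mu) in *.
  set (k := sqrt (1 - e ^ 2)) in *; set (d := sqrt (1 - e ^ 2 * C ^ 2)) in *.
  assert (He2 : 0 < 1 - e ^ 2) by nra.
  replace (((A * C - A * e) * (k * C / d) + A * k * S * (S / d)) / (A * (1 - e * C)))
    with (k / d) by (field_simplify_eq; [nsatz_eqs | split; nra]).
  replace ((k * C / d) ^ 2 + (S / d) ^ 2 + 0 ^ 2 - (k / d) ^ 2)
    with (e ^ 2 * S ^ 2 / (1 - e ^ 2 * C ^ 2)) by (field_simplify_eq; [nsatz_eqs | nra]).
  set (q := k / d).
  assert (Hq : q ^ 2 * (1 - e ^ 2 * C ^ 2) = 1 - e ^ 2)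
    by (unfold q; field_simplify_eq; [nsatz_eqs | lra]).
  replace (q - k * C / d / e) with (q * (e - C) / e) by (unfold q; field; lra).
  replace (S / d * k / e) with (q * S / e) by (unfold q; field; lra).
  rewrite kepler_sroot_deriv_normal by auto.
  clearbody q. clear Hk Hd. clearbody k d.
  unfold kepler_s, A; cbn [fst].
  field_simplify_eq; [nsatz_eqs|].
  repeat split; try nra; apply Rgt_not_eq; nra.
Qed.

Lemma Rpower_3_2 L : 0 < L -> Rpower L (3 / 2) = sqrt (L ^ 3).
Proof.
  intro HL. replace (3 / 2) with (INR 3 * / 2) by (simpl; field).
  rewrite <- Rpower_mult, Rpower_pow by auto. apply Rpower_sqrt. apply pow_lt; auto.
Qed.

Lemma inv_sqrt_curvature m L a b : 0 < m -> 0 < L -> 0 < a -> 0 < b ->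
  / sqrt (Rabs (- (m ^ 2 / L ^ 3) * (b / a))) = Rpower L (3 / 2) / m * sqrt (a / b).
Proof.
  intros Hm HL Ha Hb. rewrite Rpower_3_2 by auto.
  assert (HL3 : 0 < L ^ 3) by (apply pow_lt; auto).
  assert (Hx : 0 < m ^ 2 / L ^ 3 * (b / a))
    by (apply Rmult_lt_0_compat; apply Rdiv_lt_0_compat; try apply pow_lt; lra).
  rewrite Rabs_left by lra. rewrite Ropp_mult_distr_l, Ropp_involutive.
  assert (Hs := sqrt_lt_R0 _ Hx).
  assert (E : sqrt (m ^ 2 / L ^ 3 * (b / a)) * (sqrt (L ^ 3) * sqrt (a / b)) = m).
  { assert (Hab : 0 < a / b) by (apply Rdiv_lt_0_compat; lra).
    rewrite <- !sqrt_mult by (apply Rlt_le; first [lra | apply Rmult_lt_0_compat; lra]).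
    replace (m ^ 2 / L ^ 3 * (b / a) * (L ^ 3 * (a / b))) with (m ^ 2) by (field; lra).
    rewrite sqrt_sq_abs. apply Rabs_pos_eq. lra. }
  apply Rmult_eq_reg_l with (sqrt (m ^ 2 / L ^ 3 * (b / a))); [|lra].
  rewrite Rinv_r by lra.
  replace (sqrt (m ^ 2 / L ^ 3 * (b / a)) * (sqrt (L ^ 3) / m * sqrt (a / b)))
    with (sqrt (m ^ 2 / L ^ 3 * (b / a)) * (sqrt (L ^ 3) * sqrt (a / b)) / m) by (field; lra).
  rewrite E. field. lra.
Qed.

Theorem corollary5p5 :
  forall mu lam e eps v : R,
    0 < mu -> 0 < lam -> 0 < e < 1 -> 0 < eps -> 0 <= v < 2 * PI ->
    let Rf := fun p : R3 => eps ^ 2 * Reps mu lam e eps p in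
    let dN := - (mu ^ 2 / lam ^ 3) *
              ((1 + e * cos v) / ((1 - e * cos v) * (1 + e ^ 2 + 2 * e * cos v))) in
    let dK := - (mu ^ 2 / lam ^ 3) * (1 / (1 + e ^ 2 - 2 * e * cos v)) in
    second_dir_deriv Rf (xell mu lam e v) (nhat e v) dN /\
    second_dir_deriv Rf (xell mu lam e v) khat dK /\
    eps * / sqrt (Rabs dN) =
      eps * Rpower lam (3 / 2) / mu *
      sqrt ((1 - e * cos v) * (1 + e ^ 2 + 2 * e * cos v) / (1 + e * cos v)) /\
    eps * / sqrt (Rabs dK) =
      eps * Rpower lam (3 / 2) / mu * sqrt (1 + e ^ 2 - 2 * e * cos v).
Proof.
  intros mu lam e eps v Hmu Hlam He Heps _ Rf dN dK.
  assert (HC := ecos_bound e v He).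
  split; [apply nhat_second_deriv; auto|].
  split; [apply khat_second_deriv; auto|].
  split.
  - assert (Ha : 0 < (1 - e * cos v) * (1 + e ^ 2 + 2 * e * cos v))
      by (apply Rmult_lt_0_compat; nra).
    unfold dN. rewrite inv_sqrt_curvature by nra. unfold Rdiv. ring.
  - unfold dK. rewrite inv_sqrt_curvature, Rdiv_1_r by nra. unfold Rdiv. ring.
Qed.
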